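(* Let $n>2$, $1\le k<n$, and let the triple $(\kappa,M,p)$ satisfy Assumption (A) (see context). Then there is a multivariate polynomial $g_{\kappa,M,p}:\mathbb{R}^n\times\mathbb{R}^{n\times k}\to\mathbb{R}$, which does not depend on the hypothesis $(R,r)$, such that for every $X\in\mathfrak{X}_0$ $$N(\hat\Omega_{\kappa,M,p,X})=\{y\in\mathbb{R}^n: g_{\kappa,M,p}(y,X)=0\}.$$ In particular $N(\hat\Omega_{\kappa,M,p,X})$ is an algebraic subset of $\mathbb{R}^n$.
   Context: Let $n>2$ and $1\le k<n$ be integers and $\mathfrak{X}_0=\{X\in\mathbb{R}^{n\times k}:\operatorname{rank}(X)=k\}$. For $X\in\mathfrak{X}_0$, $y\in\mathbb{R}^n$: $\hat\beta_X(y)=(X'X)^{-1}X'y$, $\hat u_X(y)=y-X\hat\beta_X(y)$. A hypothesis is $(R,r)$ with $R\in\mathbb{R}^{q\times k}$, $\operatorname{rank}(R)=q\ge1$, $r\in\mathbb{R}^q$. Construction of the prewhitened estimator $\hat\Omega_{\kappa,M,p,X}$ at $y$ (given kernel $\kappa:\mathbb{R}\to\mathbb{R}$, bandwidth $M$, integer order $p$): let $\hat V(y)=X'\operatorname{diag}(\hat u_X(y))\in\mathbb{R}^{k\times n}$ with columns $\hat V_{\cdot j}(y)$; $\hat V_p(y)=(\hat V_{\cdot(p+1)}(y),\dots,\hat V_{\cdot n}(y))\in\mathbb{R}^{k\times(n-p)}$; $\hat V_1(y)\in\mathbb{R}^{kp\times(n-p)}$ has $j$-th column $(\hat V_{\cdot(j+p-1)}(y)',\dots,\hat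 V_{\cdot(j+1)}(y)',\hat V_{\cdot j}(y)')'$. If $\hat V_1\hat V_1'$ is invertible, $\hat A^{(p)}(y)=(\hat A_1(y),\dots,\hat A_p(y))=\hat V_p(y)\hat V_1(y)'(\hat V_1(y)\hat V_1(y)')^{-1}$ ($\hat A_l\in\mathbb{R}^{k\times k}$) and $\hat Z(y)=\hat V_p(y)-\hat A^{(p)}(y)\hat V_1(y)\in\mathbb{R}^{k\times(n-p)}$. Put $\check\Gamma_i(y)=(n-p)^{-1}\sum_{j=i+1}^{n-p}\hat Z_{\cdot j}(y)\hat Z_{\cdot(j-i)}(y)'$ for $0\le i\le n-p-1$, $\check\Gamma_{-i}=\check\Gamma_i'$, and $\check\Psi(y)=\sum_{i=-(n-p-1)}^{n-p-1}\kappa(i/M(y))\check\Gamma_i(y)$, where if $M(y)=0$ the weight $\kappa(i/M(y))$ is read as $1$ for $i=0$ and $0$ for $i\neq0$. If $I_k-\sum_{l=1}^p\hat A_l(y)$ is invertible, with $F=(I_k-\sum_l\hat A_l(y))^{-1}$ set $\hat\Psi(y)=F\check\Psi(y)F'$ and $\hat\Omega_{\kappa,M,p,X}(y)=nR(X'X)^{-1}\hat\Psi(y)(X'X)^{-1}R'$. The estimator is undefined at $y$ if $\hat V_1(y)\hat V_1(y)'$ is singular, or $I_k-\sum_l\hat A_l(y)$ is singular, or $M(y)$ is undefined. $N(\hat\Omega_{\kappa,M,p,X})$ is the set of $y$ where it is undefined. Bandwidths (computed from $\hat Z(y)$; undefined whenever $\hat Z(y)$ is undefined or a denominator below vanishes;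 all tuning constants are functionally independent of $y$ and $X$). A weights vector is $\omega\in\mathbb{R}^k\setminus\{0\}$ with nonnegative entries. $\mathbb{M}_{AM}$: with $\hat\rho_i=\sum_{j=2}^{n-p}\hat Z_{ij}\hat Z_{i(j-1)}/\sum_{j=1}^{n-p-1}\hat Z_{ij}^2$, $\hat\sigma_i^2=(n-p-1)^{-1}\sum_{j=2}^{n-p}(\hat Z_{ij}-\hat\rho_i\hat Z_{i(j-1)})^2$ ($i=1,\dots,k$), $\hat\alpha_1=\sum_i\omega_i\frac{4\hat\rho_i^2\hat\sigma_i^4}{(1-\hat\rho_i)^6(1+\hat\rho_i)^2}\big/\sum_i\omega_i\frac{\hat\sigma_i^4}{(1-\hat\rho_i)^4}$, $\hat\alpha_2=\sum_i\omega_i\frac{4\hat\rho_i^2\hat\sigma_i^4}{(1-\hat\rho_i)^8}\big/\sum_i\omega_i\frac{\hat\sigma_i^4}{(1-\hat\rho_i)^4}$, $M(y)=c_1(\hat\alpha_j(y)n)^{c_2}$ for fixed $c_1,c_2>0$, $j\in\{1,2\}$, weights vector $\omega$. $\mathbb{M}_{NW}$: with a weights vector $\omega$, numbers $w(i)\ge0$ ($|i|\le n-p-1$), $w(0)=1$, $\bar\sigma_i(y)=\omega'\check\Gamma_{|i|}(y)\omega$, $M(y)=\bar c_2\big(\big[\sum_{i}|i|^{\bar c_1}w(i)\bar\sigma_i(y)/\sum_i w(i)\bar\sigma_i(y)\big]^2n\big)^{\bar c_3}$ (sums over $|i|\le n-p-1$), $\bar c_1$ a positive integer, $\bar c_2,\bar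 c_3>0$. $\mathbb{M}_{KV}$: constant bandwidths $M>0$. Assumption (A) on $(\kappa,M,p)$: (i) $\kappa$ is even, continuous, $\kappa(0)=1$, $\kappa(x)\to0$ as $x\to\infty$, and for every real $s>0$ and positive integer $J$ the $J\times J$ matrix $(\kappa((i-j)/s))_{i,j}$ is positive definite; (ii) $M\in\mathbb{M}_{AM}\cup\mathbb{M}_{NW}\cup\mathbb{M}_{KV}$; (iii) $p$ is an integer with $1\le p\le n/(k+1)$. *)

From HB Require Import structures.
From mathcomp Require Import all_boot all_order all_algebra.
From mathcomp Require Import all_classical all_reals all_analysis.
From mathcomp Require mpoly.
Set Implicit Arguments. Unset Strict Implicit. Unset Printing Implicit Defensive.
Import Order.TTheory GRing.Theory Num.Theory.
Import numFieldNormedType.Exports.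
Local Open Scope ring_scope.
Local Open Scope classical_set_scope.

Section Defs.
Variable R : realType.

(* entry (i,j) (0-indexed) of a matrix, 0 outside the range *)
Definition mget (m n : nat) (A : 'M[R]_(m, n)) (i j : nat) : R :=
  match (insub i : option 'I_m), (insub j : option 'I_n) with
  | Some a, Some b => A a b
  | _, _ => 0
  end.

Definition weights_vector (k : nat) (om : 'cV[R]_k) : Prop :=
  om != 0 /\ forall i, 0 <= om i 0.

(* BW_AM c1 c2 j om   : M(y) = c1 (alpha_j(y) n)^c2
   BW_NW om w c1 c2 c3 : M(y) = c2 ([sum |i|^c1 w(i) sbar_i / sum w(i) sbar_i]^2 n)^c3
   BW_KV M            : constant bandwidth M *)
Inductive bandwidth (k : nat) :=
  | BW_AM of R & R & nat & 'cV[R]_k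
  | BW_NW of 'cV[R]_k & (int -> R) & nat & R & R
  | BW_KV of R.

Section Estimator.
Variables (n k : nat) (p : nat).
Local Notation m := (n - p)%N.

Definition betahat (X : 'M[R]_(n, k)) (y : 'cV[R]_n) : 'cV[R]_k :=
  invmx (X^T *m X) *m X^T *m y.
Definition uhat (X : 'M[R]_(n, k)) (y : 'cV[R]_n) : 'cV[R]_n :=
  y - X *m betahat X y.

Definition Vhat (X : 'M[R]_(n, k)) (y : 'cV[R]_n) : 'M[R]_(k, n) :=
  X^T *m diag_mx (uhat X y)^T.
(* Vhat_p: columns p+1..n (1-indexed) *)
Definition Vhatp (V : 'M[R]_(k, n)) : 'M[R]_(k, m) :=
  \matrix_(a < k, j < m) mget V a (j + p).
(* Vhat_1: column j (1-indexed) = (V_{j+p-1}', ..., V_{j}')';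
   row r = l*k + a (0-indexed block l < p, component a < k) is entry a of
   V_{j+p-1-l} (1-indexed), i.e. 0-indexed column j + p - 1 - l. *)
Definition Vhat1 (V : 'M[R]_(k, n)) : 'M[R]_(k * p, m) :=
  \matrix_(r < k * p, j < m) mget V (r %% k) (j + p - 1 - r %/ k).

Definition Ahat (V : 'M[R]_(k, n)) : 'M[R]_(k, k * p) :=
  Vhatp V *m (Vhat1 V)^T *m invmx (Vhat1 V *m (Vhat1 V)^T).
(* sum_{l=1}^p A_l, where A_l is the l-th k x k block of Ahat *)
Definition sumA (A : 'M[R]_(k, k * p)) : 'M[R]_k :=
  \matrix_(a < k, b < k) \sum_(l < p) mget A a (l * k + b).
Definition Zhat (V : 'M[R]_(k, n)) : 'M[R]_(k, m) :=
  Vhatp V - Ahat V *m Vhat1 V.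

(* checkGamma_i, 0 <= i <= m-1 (sum over 1-indexed j = i+1..m) *)
Definition Gam (Z : 'M[R]_(k, m)) (i : nat) : 'M[R]_k :=
  (m%:R)^-1 *: \sum_(i <= j < m)
     (\matrix_(a < k, b < k) (mget Z a j * mget Z b (j - i))).

(* kernel weight kappa(i / M), read as 1_{i = 0} when M = 0 *)
Definition kweight (kappa : R -> R) (M : R) (i : int) : R :=
  if M == 0 then (i == 0)%:R else kappa (i%:~R / M).

Definition checkPsi (kappa : R -> R) (M : R) (Z : 'M[R]_(k, m)) : 'M[R]_k :=
  \sum_(0 <= i < m) kweight kappa M i%:Z *: Gam Z i
  + \sum_(1 <= i < m) kweight kappa M (- i%:Z) *: (Gam Z i)^T.

Definition rho_num (Z : 'M[R]_(k, m)) (i : 'I_k) : R :=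
  \sum_(1 <= j < m) mget Z i j * mget Z i (j - 1).
Definition rho_den (Z : 'M[R]_(k, m)) (i : 'I_k) : R :=
  \sum_(0 <= j < m.-1) mget Z i j ^+ 2.
Definition rhohat Z i := rho_num Z i / rho_den Z i.
Definition sig2hat (Z : 'M[R]_(k, m)) (i : 'I_k) : R :=
  ((m.-1)%:R)^-1 * \sum_(1 <= j < m) (mget Z i j - rhohat Z i * mget Z i (j - 1)) ^+ 2.

Definition AM_bandwidth (c1 c2 : R) (jj : nat) (om : 'cV[R]_k)
    (Z : 'M[R]_(k, m)) : option R :=
  let rho := rhohat Z in
  let s2 := sig2hat Z in
  let D := \sum_(i < k) om i 0 * (s2 i ^+ 2 / (1 - rho i) ^+ 4) in
  if jj == 1%N then
    if [forall i, (rho_den Z i != 0) && ((1 - rho i) ^+ 6 * (1 + rho i) ^+ 2 != 0)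
                  && ((1 - rho i) ^+ 4 != 0)] && (D != 0) then
      let a := (\sum_(i < k) om i 0 * (4 * rho i ^+ 2 * s2 i ^+ 2
                    / ((1 - rho i) ^+ 6 * (1 + rho i) ^+ 2))) / D in
      Some (c1 * powR (a * n%:R) c2)
    else None
  else
    if [forall i, (rho_den Z i != 0) && ((1 - rho i) ^+ 8 != 0)
                  && ((1 - rho i) ^+ 4 != 0)] && (D != 0) then
      let a := (\sum_(i < k) om i 0 * (4 * rho i ^+ 2 * s2 i ^+ 2
                    / (1 - rho i) ^+ 8)) / D in
      Some (c1 * powR (a * n%:R) c2)
    else None.

(* integer index i = t - (m-1), t < 2m-1, ranges over |i| <= m-1 *)
Definition NW_bandwidth (om : 'cV[R]_k) (w : int -> R) (c1 : nat) (c2 c3 : R)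
    (Z : 'M[R]_(k, m)) : option R :=
  let idx (t : nat) : int := t%:Z - (m.-1)%:Z in
  let sbar (i : int) : R := (om^T *m Gam Z `|i|%N *m om) 0 0 in
  let num := \sum_(t < (2 * m).-1) (`|idx t|%N%:R ^+ c1 * w (idx t) * sbar (idx t)) in
  let den := \sum_(t < (2 * m).-1) (w (idx t) * sbar (idx t)) in
  if den != 0 then Some (c2 * powR ((num / den) ^+ 2 * n%:R) c3) else None.

Definition bandwidth_val (bw : bandwidth k) (Z : 'M[R]_(k, m)) : option R :=
  match bw with
  | BW_AM c1 c2 jj om => AM_bandwidth c1 c2 jj om Z
  | BW_NW om w c1 c2 c3 => NW_bandwidth om w c1 c2 c3 Z
  | BW_KV M => Some M
  end.

Definition hatOmega (kappa : R -> R) (bw : bandwidth k) (q : nat)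
    (X : 'M[R]_(n, k)) (Rm : 'M[R]_(q, k)) (y : 'cV[R]_n) : option 'M[R]_q :=
  let V := Vhat X y in
  if Vhat1 V *m (Vhat1 V)^T \in unitmx then
    let B := 1%:M - sumA (Ahat V) in
    if B \in unitmx then
      let Z := Zhat V in
      match bandwidth_val bw Z with
      | Some M =>
          let F := invmx B in
          let Psi := F *m checkPsi kappa M Z *m F^T in
          let S := invmx (X^T *m X) in
          Some (n%:R *: (Rm *m S *m Psi *m S *m Rm^T))
      | None => None
      end
    else None
  else None.

Definition Nset (kappa : R -> R) (bw : bandwidth k) (q : nat)
    (X : 'M[R]_(n, k)) (Rm : 'M[R]_(q, k)) : set 'cV[R]_n :=
  [set y | hatOmega kappa bw X Rm y = None].

Definition kernel_ok (kappa : R -> R) : Prop :=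
  (forall x, kappa (- x) = kappa x) /\ continuous kappa /\ kappa 0 = 1 /\
  (kappa x @[x --> +oo] --> 0) /\
  (forall (s : R), 0 < s -> forall (J : nat) (v : 'cV[R]_J), v != 0 ->
     0 < (v^T *m (\matrix_(i < J, j < J) kappa ((i%:R - j%:R) / s)) *m v) 0 0).

Definition bandwidth_ok (bw : bandwidth k) : Prop :=
  match bw with
  | BW_AM c1 c2 jj om => 0 < c1 /\ 0 < c2 /\ (jj = 1%N \/ jj = 2%N) /\ weights_vector om
  | BW_NW om w c1 c2 c3 =>
      weights_vector om /\ (forall i : int, (`|i|%N <= m.-1)%N -> 0 <= w i) /\ w 0 = 1 /\
      (0 < c1)%N /\ 0 < c2 /\ 0 < c3
  | BW_KV M => 0 < M
  end.

Definition assumptionA (kappa : R -> R) (bw : bandwidth k) : Prop :=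
  kernel_ok kappa /\ bandwidth_ok bw /\ (1 <= p)%N /\ (p * (k + 1) <= n)%N.

Definition env (X : 'M[R]_(n, k)) (y : 'cV[R]_n) : 'I_(n + n * k) -> R :=
  fun i => (row_mx y^T (mxvec X)) 0 i.

End Estimator.
End Defs.

From mathcomp Require Import all_boot all_order all_algebra.
From mathcomp Require Import classical_sets reals.
From mathcomp Require Import mpoly ring.
Import Order.TTheory GRing.Theory Num.Theory.
Set Implicit Arguments. Unset Strict Implicit. Unset Printing Implicit Defensive.
Local Open Scope ring_scope.

(* Every quantity entering the estimator (OLS residuals, the prewhitening VAR
   coefficients, the filtered series Z, its autocovariances and the bandwidth
   ingredients) is a rational function of the entries of (y, X) on the set where the
   matrices inverted so far are invertible.  Each condition for the estimator to be
   defined says that one more such rational function, possibly a determinant, is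
   nonzero, i.e. that its numerator is nonzero.  Chaining the conditions, the
   estimator is defined exactly where the product of these numerators is nonzero.
   This single polynomial serves every full-rank X, as X'X is then invertible. *)

Section RationalFunctions.
Variables (R : fieldType) (N : nat) (T : Type) (e : T -> 'I_N -> R).

Definition polyfun (f : T -> R) := exists g : {mpoly R[N]}, forall t, f t = g.@[e t].

Lemma polyfun_cst c : polyfun (fun=> c).
Proof. by exists c%:MP => t; rewrite mevalC. Qed.

Lemma polyfun_var i : polyfun (fun t => e t i).
Proof. by exists 'X_i => t; rewrite mevalXU. Qed.

Lemma polyfun_add f g : polyfun f -> polyfun g -> polyfun (fun t => f t + g t).
Proof. by move=> [a fa] [b gb]; exists (a + b) => t; rewrite mevalD fa gb. Qed.

Lemma polyfun_mul f g : polyfun f -> polyfun g -> polyfun (fun t => f t * g t).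
Proof. by move=> [a fa] [b gb]; exists (a * b) => t; rewrite mevalM fa gb. Qed.

Lemma polyfun_prod (I : Type) (r : seq I) (F : I -> T -> R) :
  (forall i, polyfun (F i)) -> polyfun (fun t => \prod_(i <- r) F i t).
Proof.
move=> polyF; elim: r => [|i r IHr].
  by have [c Ec] := polyfun_cst 1; exists c => t; rewrite big_nil.
by have [a Ea] := polyfun_mul (polyF i) IHr; exists a => t; rewrite big_cons.
Qed.

Definition ratfun (D : T -> Prop) (f : T -> R) :=
  exists P Q, [/\ polyfun P, polyfun Q & forall t, D t -> Q t != 0 /\ f t = P t / Q t].

Lemma ratfun_poly D f : polyfun f -> ratfun D f.
Proof.
move=> polyf; exists f, (fun=> 1); split=> //; first exact: polyfun_cst.
by move=> t _; rewrite oner_neq0 divr1.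
Qed.

Lemma ratfun_cst D c : ratfun D (fun=> c).
Proof. exact/ratfun_poly/polyfun_cst. Qed.

Lemma ratfun_eq D f g : ratfun D f -> (forall t, D t -> f t = g t) -> ratfun D g.
Proof.
move=> [P [Q [polyP polyQ fPQ]]] fg; exists P, Q; split=> // t Dt.
by rewrite -fg //; apply: fPQ.
Qed.

Lemma ratfun_restrict D D' f : ratfun D f -> (forall t, D' t -> D t) -> ratfun D' f.
Proof.
by move=> [P [Q [polyP polyQ fPQ]]] D'D; exists P, Q; split=> // t /D'D; apply: fPQ.
Qed.

Lemma ratfun_add D f g : ratfun D f -> ratfun D g -> ratfun D (fun t => f t + g t).
Proof.
move=> [P [Q [polyP polyQ fPQ]]] [P' [Q' [polyP' polyQ' gPQ]]].
exists (fun t => P t * Q' t + P' t * Q t), (fun t => Q t * Q' t); split.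
- by apply: polyfun_add; apply: polyfun_mul.
- exact: polyfun_mul.
move=> t Dt; have [Q0 ->] := fPQ t Dt; have [Q'0 ->] := gPQ t Dt.
by rewrite mulf_neq0 //; split=> //; field; apply/andP.
Qed.

Lemma ratfun_mul D f g : ratfun D f -> ratfun D g -> ratfun D (fun t => f t * g t).
Proof.
move=> [P [Q [polyP polyQ fPQ]]] [P' [Q' [polyP' polyQ' gPQ]]].
exists (fun t => P t * P' t), (fun t => Q t * Q' t); split; try exact: polyfun_mul.
move=> t Dt; have [Q0 ->] := fPQ t Dt; have [Q'0 ->] := gPQ t Dt.
by rewrite mulf_neq0 //; split=> //; field; apply/andP.
Qed.

Lemma ratfun_opp D f : ratfun D f -> ratfun D (fun t => - f t).
Proof.
move=> ratf.
by apply: ratfun_eq (ratfun_mul (ratfun_cst D (-1)) ratf) _ => t _; rewrite mulN1r.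
Qed.

Lemma ratfun_sub D f g : ratfun D f -> ratfun D g -> ratfun D (fun t => f t - g t).
Proof. by move=> ratf ratg; apply/ratfun_add/ratfun_opp. Qed.

Lemma ratfun_exp D f j : ratfun D f -> ratfun D (fun t => f t ^+ j).
Proof.
move=> ratf; elim: j => [|j IHj]; first exact: ratfun_cst.
by apply: ratfun_eq (ratfun_mul ratf IHj) _ => t _; rewrite exprS.
Qed.

Lemma ratfun_sum D (I : Type) (r : seq I) (F : I -> T -> R) :
  (forall i, ratfun D (F i)) -> ratfun D (fun t => \sum_(i <- r) F i t).
Proof.
move=> ratF; elim: r => [|i r IHr].
  by apply: ratfun_eq (ratfun_cst D 0) _ => t _; rewrite big_nil.
by apply: ratfun_eq (ratfun_add (ratF i) IHr) _ => t _; rewrite big_cons.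
Qed.

Lemma ratfun_prod D (I : Type) (r : seq I) (F : I -> T -> R) :
  (forall i, ratfun D (F i)) -> ratfun D (fun t => \prod_(i <- r) F i t).
Proof.
move=> ratF; elim: r => [|i r IHr].
  by apply: ratfun_eq (ratfun_cst D 1) _ => t _; rewrite big_nil.
by apply: ratfun_eq (ratfun_mul (ratF i) IHr) _ => t _; rewrite big_cons.
Qed.

Lemma ratfun_div D f g :
  ratfun D f -> ratfun D g -> ratfun (fun t => D t /\ g t != 0) (fun t => f t / g t).
Proof.
move=> [P [Q [polyP polyQ fPQ]]] [P' [Q' [polyP' polyQ' gPQ]]].
exists (fun t => P t * Q' t), (fun t => Q t * P' t); split; try exact: polyfun_mul.
move=> t [Dt]; have [Q0 ->] := fPQ t Dt; have [Q'0 ->] := gPQ t Dt.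
rewrite mulf_eq0 invr_eq0 negb_or (negbTE Q'0) andbT => P'0.
by rewrite mulf_neq0 //; split=> //; field; rewrite Q0 Q'0 P'0.
Qed.

Definition coalgebraic (D P : T -> Prop) :=
  exists h, polyfun h /\ forall t, D t -> P t <-> h t != 0.

Lemma coalgebraic_iff D P Q :
  coalgebraic D P -> (forall t, D t -> P t <-> Q t) -> coalgebraic D Q.
Proof.
move=> [h [polyh Ph]] PQ; exists h; split=> // t Dt.
by rewrite -(PQ t Dt); apply: Ph.
Qed.

Lemma coalgebraic_true D : coalgebraic D (fun=> True).
Proof. by exists (fun=> 1); split=> [|t _]; [apply: polyfun_cst|rewrite oner_neq0]. Qed.

Lemma coalgebraic_ratfun_neq0 D f : ratfun D f -> coalgebraic D (fun t => f t != 0).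
Proof.
move=> [P [Q [polyP polyQ fPQ]]]; exists P; split=> // t Dt.
by have [Q0 ->] := fPQ t Dt; rewrite mulf_eq0 invr_eq0 (negbTE Q0) orbF.
Qed.

Lemma coalgebraic_and D P Q :
  coalgebraic D P -> coalgebraic (fun t => D t /\ P t) Q ->
  coalgebraic D (fun t => P t /\ Q t).
Proof.
move=> [h [polyh Ph]] [h' [polyh' Qh']]; exists (fun t => h t * h' t).
split=> [|t Dt]; first exact: polyfun_mul.
rewrite mulf_eq0 negb_or; split=> [[Pt Qt]|/andP[ht h't]].
  by apply/andP; split; [apply/(Ph t Dt) | apply/(Qh' t)].
have Pt : P t by apply/(Ph t Dt).
by split=> //; apply/(Qh' t).
Qed.

Lemma coalgebraic_forall D (I : finType) (P : I -> T -> Prop) :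
  (forall i, coalgebraic D (P i)) -> coalgebraic D (fun t => forall i, P i t).
Proof.
move=> coalgP; have [h hP] := fin_all_exists coalgP.
exists (fun t => \prod_i h i t); split=> [|t Dt].
  by apply: polyfun_prod => i; case: (hP i).
rewrite prodf_seq_neq0; split=> [Pt|/allP Ph i].
  by apply/allP => i _; apply/(proj2 (hP i) t Dt).
by apply/(proj2 (hP i) t Dt)/Ph; rewrite mem_index_enum.
Qed.

Definition ratmx (D : T -> Prop) a b (F : T -> 'M[R]_(a, b)) :=
  forall i j, ratfun D (fun t => F t i j).

Lemma ratmx_restrict D D' a b (F : T -> 'M[R]_(a, b)) :
  ratmx D F -> (forall t, D' t -> D t) -> ratmx D' F.
Proof. by move=> ratF D'D i j; apply: ratfun_restrict D'D. Qed.

Lemma ratmx_cst D a b (A : 'M[R]_(a, b)) : ratmx D (fun=> A).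
Proof. by move=> i j; apply: ratfun_cst. Qed.

Lemma ratmx_sub D a b (F G : T -> 'M[R]_(a, b)) :
  ratmx D F -> ratmx D G -> ratmx D (fun t => F t - G t).
Proof.
move=> ratF ratG i j.
by apply: ratfun_eq (ratfun_sub (ratF i j) (ratG i j)) _ => t _; rewrite !mxE.
Qed.

Lemma ratmx_scale D a b (c : T -> R) (F : T -> 'M[R]_(a, b)) :
  ratfun D c -> ratmx D F -> ratmx D (fun t => c t *: F t).
Proof.
move=> ratc ratF i j.
by apply: ratfun_eq (ratfun_mul ratc (ratF i j)) _ => t _; rewrite mxE.
Qed.

Lemma ratmx_tr D a b (F : T -> 'M[R]_(a, b)) : ratmx D F -> ratmx D (fun t => (F t)^T).
Proof. by move=> ratF i j; apply: ratfun_eq (ratF j i) _ => t _; rewrite mxE. Qed.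

Lemma ratmx_sum D a b (I : Type) (r : seq I) (F : I -> T -> 'M[R]_(a, b)) :
  (forall l, ratmx D (F l)) -> ratmx D (fun t => \sum_(l <- r) F l t).
Proof.
move=> ratF i j; apply: ratfun_eq (ratfun_sum r (fun l => ratF l i j)) _ => t _.
by rewrite summxE.
Qed.

Lemma ratmx_mul D a b c (F : T -> 'M[R]_(a, b)) (G : T -> 'M[R]_(b, c)) :
  ratmx D F -> ratmx D G -> ratmx D (fun t => F t *m G t).
Proof.
move=> ratF ratG i j.
apply: ratfun_eq (ratfun_sum _ (fun l => ratfun_mul (ratF i l) (ratG l j))) _.
by move=> t _; rewrite mxE.
Qed.

Lemma ratmx_diag D b (F : T -> 'rV[R]_b) : ratmx D F -> ratmx D (fun t => diag_mx (F t)).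
Proof.
move=> ratF i j; apply: ratfun_eq (ratfun_mul (ratF 0 i) (ratfun_cst D (i == j)%:R)) _.
by move=> t _; rewrite mxE mulr_natr.
Qed.

Lemma ratfun_det D a (F : T -> 'M[R]_a) : ratmx D F -> ratfun D (fun t => \det (F t)).
Proof.
move=> ratF; apply: ratfun_sum => s; apply: ratfun_mul; first exact: ratfun_cst.
by apply: ratfun_prod => i; apply: ratF.
Qed.

Lemma ratmx_adj D a (F : T -> 'M[R]_a) : ratmx D F -> ratmx D (fun t => \adj (F t)).
Proof.
move=> ratF i j; have minor_ratmx : ratmx D (fun t => row' j (col' i (F t))).
  by move=> i' j'; apply: ratfun_eq (ratF _ _) _ => t _; rewrite !mxE.
apply: ratfun_eq (ratfun_mul (ratfun_cst D _) (ratfun_det minor_ratmx)) _.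
by move=> t _; rewrite mxE.
Qed.

Lemma ratmx_inv D a (F : T -> 'M[R]_a) :
  ratmx D F -> ratmx (fun t => D t /\ F t \in unitmx) (fun t => invmx (F t)).
Proof.
move=> ratF i j; have adj_det := ratfun_div (ratmx_adj ratF i j) (ratfun_det ratF).
apply: ratfun_eq (ratfun_restrict adj_det _) _ => t [Dt Ft_unit].
  by split=> //; rewrite -unitfE -unitmxE.
by rewrite /invmx Ft_unit [RHS]mxE mulrC.
Qed.

Lemma coalgebraic_unitmx D a (F : T -> 'M[R]_a) :
  ratmx D F -> coalgebraic D (fun t => F t \in unitmx).
Proof.
move=> ratF; apply: coalgebraic_iff (coalgebraic_ratfun_neq0 (ratfun_det ratF)) _ => t _.
by rewrite unitmxE unitfE.
Qed.

End RationalFunctions.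

Lemma unitmx_gram (R : realFieldType) n k (X : 'M[R]_(n, k)) :
  \rank X = k -> X^T *m X \in unitmx.
Proof.
move=> rankX; rewrite -row_free_unit; apply/inj_row_free => v vXX0.
have vX0 : v *m X^T = 0.
  set w := v *m X^T; apply/rowP => j; rewrite [RHS]mxE.
  have : (w *m w^T) 0 0 = 0 by rewrite trmx_mul trmxK mulmxA -(mulmxA v) vXX0 !mul0mx mxE.
  have wwT_ge0 l : true -> 0 <= w 0 l * w^T l 0 by rewrite [w^T _ _]mxE -expr2 sqr_ge0.
  rewrite mxE => /(psumr_eq0P wwT_ge0) /(_ j isT).
  by rewrite [w^T _ _]mxE -expr2 => /eqP; rewrite sqrf_eq0 => /eqP.
have free_Xt : row_free X^T by rewrite /row_free mxrank_tr rankX.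
by apply: (row_free_inj free_Xt); rewrite vX0 mul0mx.
Qed.

Section Estimator.
Variables (R : realType) (n k p : nat).
Local Notation m := (n - p)%N.
Local Notation sample := ('M[R]_(n, k) * 'cV[R]_n)%type.

Definition sample_env (t : sample) := env t.1 t.2.
Local Notation ratfun := (ratfun sample_env).
Local Notation ratmx := (ratmx sample_env).
Local Notation coalgebraic := (coalgebraic sample_env).

Definition design_regular (t : sample) := t.1^T *m t.1 \in unitmx.
Definition lag_regular (t : sample) :=
  Vhat1 p (Vhat t.1 t.2) *m (Vhat1 p (Vhat t.1 t.2))^T \in unitmx.
Definition filter_invertible (t : sample) := 1%:M - sumA (Ahat p (Vhat t.1 t.2)) \in unitmx.
Definition bandwidth_defined (bw : bandwidth R k) (t : sample) :=
  isSome (bandwidth_val bw (Zhat p (Vhat t.1 t.2))).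
Definition estimable bw (t : sample) :=
  lag_regular t /\ filter_invertible t /\ bandwidth_defined bw t.

Lemma hatOmega_None kappa bw q X (Rm : 'M[R]_(q, k)) y :
  hatOmega p kappa bw X Rm y = None <-> ~ estimable bw (X, y).
Proof.
rewrite /hatOmega /estimable /lag_regular /filter_invertible /bandwidth_defined /=.
case: ifP => _; last by split=> // _ [].
case: ifP => _; last by split=> // _ [_ []].
case: bandwidth_val => [M|] /=; split=> //.
  by move=> /(_ (conj isT (conj isT isT))).
by move=> _ [_ []].
Qed.

Lemma ratmx_response D : ratmx D (fun t => t.2).
Proof.
move=> i j; apply: ratfun_eq (ratfun_poly _ (polyfun_var _ (lshift (n * k) i))) _ => t _.
by rewrite /sample_env /env row_mxEl mxE (ord1 j).
Qed.

Lemma ratmx_design D : ratmx D (fun t => t.1).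
Proof.
move=> i j; apply: ratfun_eq (ratfun_poly _ (polyfun_var _ (rshift n (mxvec_index i j)))) _.
by move=> t _; rewrite /sample_env /env row_mxEr mxvecE.
Qed.

Lemma ratmx_Vhat : ratmx design_regular (fun t => Vhat t.1 t.2).
Proof.
have ratbeta : ratmx design_regular (fun t => betahat t.1 t.2).
  apply: ratmx_mul (ratmx_mul _ (ratmx_tr (ratmx_design _))) (ratmx_response _).
  have ratXX := ratmx_mul (ratmx_tr (ratmx_design design_regular)) (ratmx_design design_regular).
  by apply: ratmx_restrict (ratmx_inv ratXX) _ => t; split.
apply: ratmx_mul (ratmx_tr (ratmx_design _)) _.
exact/ratmx_diag/ratmx_tr/ratmx_sub/(ratmx_mul (ratmx_design _) ratbeta)/ratmx_response.
Qed.

Lemma ratfun_mget D a b (F : sample -> 'M[R]_(a, b)) i j :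
  ratmx D F -> ratfun D (fun t => mget (F t) i j).
Proof.
rewrite /mget => ratF; case: insub => [i'|]; last exact: ratfun_cst.
by case: insub => [j'|]; [exact: ratF | exact: ratfun_cst].
Qed.

Lemma ratmx_Vhatp D (F : sample -> 'M[R]_(k, n)) : ratmx D F -> ratmx D (fun t => Vhatp p (F t)).
Proof. by move=> ratF i j; apply: ratfun_eq (ratfun_mget _ _ ratF) _ => t _; rewrite mxE. Qed.

Lemma ratmx_Vhat1 D (F : sample -> 'M[R]_(k, n)) : ratmx D F -> ratmx D (fun t => Vhat1 p (F t)).
Proof. by move=> ratF i j; apply: ratfun_eq (ratfun_mget _ _ ratF) _ => t _; rewrite mxE. Qed.

Lemma ratmx_sumA D (F : sample -> 'M[R]_(k, k * p)) : ratmx D F -> ratmx D (fun t => sumA (F t)).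
Proof.
move=> ratF i j; pose entry (l : 'I_p) := ratfun_mget i (l * k + j) ratF.
apply: ratfun_eq (ratfun_sum (index_enum 'I_p) entry) _.
by move=> t _; rewrite mxE.
Qed.

Lemma ratmx_lag_gram :
  ratmx design_regular (fun t => Vhat1 p (Vhat t.1 t.2) *m (Vhat1 p (Vhat t.1 t.2))^T).
Proof. by apply: ratmx_mul; [|apply: ratmx_tr]; apply/ratmx_Vhat1/ratmx_Vhat. Qed.

Lemma ratmx_Ahat :
  ratmx (fun t => design_regular t /\ lag_regular t) (fun t => Ahat p (Vhat t.1 t.2)).
Proof.
apply: ratmx_mul (ratmx_inv ratmx_lag_gram).
apply: ratmx_restrict (ratmx_mul (ratmx_Vhatp ratmx_Vhat) (ratmx_tr (ratmx_Vhat1 ratmx_Vhat))) _.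
by move=> t [].
Qed.

Lemma ratmx_Zhat :
  ratmx (fun t => design_regular t /\ lag_regular t) (fun t => Zhat p (Vhat t.1 t.2)).
Proof.
have ratV : ratmx (fun t => design_regular t /\ lag_regular t) (fun t => Vhat t.1 t.2).
  by apply: ratmx_restrict ratmx_Vhat _ => t [].
exact: ratmx_sub (ratmx_Vhatp ratV) (ratmx_mul ratmx_Ahat (ratmx_Vhat1 ratV)).
Qed.

Section Bandwidths.
Variables (D : sample -> Prop) (Z : sample -> 'M[R]_(k, m)).
Hypothesis ratZ : ratmx D Z.

Lemma ratmx_Gam i : ratmx D (fun t => Gam (Z t) i).
Proof.
rewrite /Gam; apply: ratmx_scale; first exact: ratfun_cst.
apply: ratmx_sum => j a b.
apply: ratfun_eq (ratfun_mul (ratfun_mget _ _ ratZ) (ratfun_mget _ _ ratZ)) _.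
by move=> t _; rewrite mxE.
Qed.

Lemma coalgebraic_NW_defined om w c1 c2 c3 :
  coalgebraic D (fun t => isSome (NW_bandwidth om w c1 c2 c3 (Z t))).
Proof.
pose idx (s : 'I_(2 * m).-1) : int := s%:Z - (m.-1)%:Z.
have ratden : ratfun D (fun t =>
    \sum_(s < (2 * m).-1) w (idx s) * (om^T *m Gam (Z t) `|idx s|%N *m om) 0 0).
  apply: ratfun_sum => s; apply: ratfun_mul; first exact: ratfun_cst.
  exact: (ratmx_mul (ratmx_mul (ratmx_cst _ _ om^T) (ratmx_Gam _)) (ratmx_cst _ _ om)) 0 0.
apply: coalgebraic_iff (coalgebraic_ratfun_neq0 ratden) _ => t _.
by rewrite /NW_bandwidth /=; case: ifP.
Qed.

Lemma coalgebraic_AM_defined c1 c2 jj om :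
  coalgebraic D (fun t => isSome (AM_bandwidth c1 c2 jj om (Z t))).
Proof.
(* [rhohat] is rational only where every [rho_den] is nonzero and [d] only where
   moreover every [c] is nonzero, so the conjuncts are peeled off in that order. *)
pose a i t := rho_den (Z t) i.
pose Da t := D t /\ forall i, a i t != 0.
have rata i : ratfun D (a i) by apply: ratfun_sum => j; apply/ratfun_exp/ratfun_mget.
have ratZa : ratmx Da Z by apply: ratmx_restrict ratZ _ => t [].
have ratrho i : ratfun Da (fun t => rhohat (Z t) i).
  apply: ratfun_restrict (ratfun_div _ (rata i)) _ => [|t [Dt a0]]; last by split.
  by apply: ratfun_sum => j; apply: ratfun_mul; apply: ratfun_mget.
have ratsig i : ratfun Da (fun t => sig2hat (Z t) i).
  apply: ratfun_mul; first exact: ratfun_cst.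
  apply: ratfun_sum => j; apply/ratfun_exp/ratfun_sub; first exact: ratfun_mget.
  exact: ratfun_mul (ratrho i) (ratfun_mget _ _ ratZa).
have rat_1subrho i : ratfun Da (fun t => 1 - rhohat (Z t) i).
  by apply: ratfun_sub; [exact: ratfun_cst | exact: ratrho].
pose c i t := (1 - rhohat (Z t) i) ^+ 4.
pose d t := \sum_(i < k) om i 0 * (sig2hat (Z t) i ^+ 2 / c i t).
have ratd : ratfun (fun t => Da t /\ forall i, c i t != 0) d.
  apply: ratfun_sum => i; apply: ratfun_mul; first exact: ratfun_cst.
  apply: ratfun_restrict (ratfun_div (ratfun_exp 2 (ratsig i)) (ratfun_exp 4 (rat_1subrho i))) _.
  by move=> t [Dat c0]; split; last exact: c0.
have cond b : (forall i, ratfun Da (b i)) -> coalgebraic D (fun t =>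
    [forall i, (a i t != 0) && (b i t != 0) && (c i t != 0)] && (d t != 0)).
  move=> ratb; apply: (@coalgebraic_iff _ _ _ _ _ (fun t =>
    (forall i, a i t != 0) /\ (forall i, c i t != 0) /\ (forall i, b i t != 0) /\ d t != 0)).
    apply: coalgebraic_and.
      by apply: coalgebraic_forall => i; apply: coalgebraic_ratfun_neq0.
    apply: coalgebraic_and.
      by apply: coalgebraic_forall => i; apply/coalgebraic_ratfun_neq0/ratfun_exp.
    apply: coalgebraic_and.
      apply: coalgebraic_forall => i; apply: coalgebraic_ratfun_neq0.
      by apply: ratfun_restrict (ratb i) _ => t [].
    by apply: coalgebraic_ratfun_neq0; apply: ratfun_restrict ratd _ => t [].
  move=> t _; split=> [[a0 [c0 [b0 ->]]]|/andP[/forallP abc ->]].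
    by rewrite andbT; apply/forallP => i; rewrite a0 b0 c0.
  by do ![split | move=> i; have /andP[/andP[]] := abc i].
rewrite /AM_bandwidth; case: (jj == 1%N).
  apply: coalgebraic_iff (cond _ _) _ => [i|t _ /=].
    have rat_1addrho := ratfun_add (ratfun_cst _ _ 1) (ratrho i).
    exact: ratfun_mul (ratfun_exp 6 (rat_1subrho i)) (ratfun_exp 2 rat_1addrho).
  by case: ifP; split.
apply: coalgebraic_iff (cond _ (fun i => ratfun_exp 8 (rat_1subrho i))) _ => t _ /=.
by case: ifP; split.
Qed.

Lemma coalgebraic_bandwidth_defined bw :
  coalgebraic D (fun t => isSome (bandwidth_val bw (Z t))).
Proof.
case: bw => [c1 c2 jj om|om w c1 c2 c3|M].
- exact: coalgebraic_AM_defined.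
- exact: coalgebraic_NW_defined.
- exact: coalgebraic_iff (coalgebraic_true _ _) _.
Qed.

End Bandwidths.

Lemma coalgebraic_estimable bw : coalgebraic design_regular (estimable bw).
Proof.
apply: coalgebraic_and; first exact: coalgebraic_unitmx ratmx_lag_gram.
apply: coalgebraic_and.
  exact: coalgebraic_unitmx (ratmx_sub (ratmx_cst _ _ _) (ratmx_sumA ratmx_Ahat)).
apply: coalgebraic_bandwidth_defined.
by apply: ratmx_restrict ratmx_Zhat _ => t [].
Qed.

End Estimator.

Local Open Scope classical_set_scope.

Theorem lemma3p1 (R : realType) (n k p : nat) (kappa : R -> R) (bw : bandwidth R k) :
  (2 < n)%N -> (1 <= k)%N -> (k < n)%N ->
  assumptionA n p kappa bw ->
  exists g : mpoly.mpoly (n + n * k) R,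
    forall (X : 'M[R]_(n, k)), \rank X = k ->
    forall (q : nat) (Rm : 'M[R]_(q, k)) (r : 'cV[R]_q),
      (1 <= q)%N -> \rank Rm = q ->
      Nset p kappa bw X Rm = [set y | mpoly.meval (env X y) g = 0].
Proof.
move=> _ _ _ _.
have [h [[g hg] estimableE]] := coalgebraic_estimable n p bw.
exists g => X rankX q Rm _ _ _.
have estimable_neq0 y : estimable p bw (X, y) <-> g.@[env X y] != 0.
  by have := estimableE (X, y) (unitmx_gram rankX); rewrite hg.
apply/seteqP; split=> y /=.
  by move=> /hatOmega_None not_estimable; apply/eqP/negbNE/negP => /estimable_neq0.
by move=> g0; apply/hatOmega_None => /estimable_neq0; rewrite g0 eqxx.
Qed.
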